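(* $rx_3(K_{2,t})=5$ for every $9\leq t\leq 20$, and $rx_3(K_{2,t})\geq 6$ for every $t\geq 21$.
   Context: An edge coloring of a graph $G$ is any assignment of colors to the edges (adjacent edges may receive the same color). A tree $T$ in an edge-colored graph is a rainbow tree if no two edges of $T$ have the same color. For $S\subseteq V(G)$, an $S$-tree is a subtree of $G$ containing all vertices of $S$. A $3$-rainbow coloring of $G$ is an edge coloring such that for every set $S$ of $3$ vertices of $G$ there is a rainbow $S$-tree in $G$. The $3$-rainbow index $rx_3(G)$ is the minimum number of colors in a $3$-rainbow coloring of $G$. $K_{2,t}$ denotes the complete bipartite graph with parts of sizes $2$ and $t$. *)

From HB Require Import structures.
From mathcomp Require Import all_boot.
Set Implicit Arguments. Unset Strict Implicit. Unset Printing Implicit Defensive.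

(* A simple graph is a symmetric irreflexive relation e on a finType V.
   Edges are represented as 2-element vertex sets {x, y}. *)
Definition edgeb (V : finType) (e : rel V) (A : {set V}) : bool :=
  [exists x, [exists y, e x y && (A == [set x; y])]].

Definition frel_of (V : finType) (F : {set {set V}}) : rel V :=
  fun x y => [set x; y] \in F.

Definition is_subtree (V : finType) (e : rel V) (W : {set V})
    (F : {set {set V}}) : Prop :=
  [/\ W != set0,
      (forall A, A \in F -> edgeb e A),
      (forall A, A \in F -> A \subset W),
      (forall x y, x \in W -> y \in W -> connect (frel_of F) x y)
    & (forall s : seq V, uniq s -> 3 <= size s -> ~~ cycle (frel_of F) s)].

Definition rainbow (V : finType) (k : nat) (col : {set V} -> 'I_k)
    (F : {set {set V}}) : Prop :=
  forall A B, A \in F -> B \in F -> col A = col B -> A = B.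

Definition rainbow3_coloring (V : finType) (e : rel V) (k : nat)
    (col : {set V} -> 'I_k) : Prop :=
  forall S : {set V}, #|S| = 3 ->
    exists (W : {set V}) (F : {set {set V}}), [/\ S \subset W, is_subtree e W F & rainbow col F].

Definition rainbow3_colorable (V : finType) (e : rel V) (k : nat) : Prop :=
  exists col : {set V} -> 'I_k, rainbow3_coloring e col.

Definition rx3_is (V : finType) (e : rel V) (n : nat) : Prop :=
  rainbow3_colorable e n /\ (forall k, k < n -> ~ rainbow3_colorable e k).

Definition K2t (t : nat) : rel ('I_2 + 'I_t)%type :=
  fun x y => match x, y with
             | inl _, inr _ | inr _, inl _ => true
             | _, _ => false
             end.
Arguments K2t t : clear implicits.

(* Write u_0, u_1 for the two vertices of the small side of K_{2,t} (the hubs)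
   and w_x, x < t, for the leaves; every edge is some u_j w_x.

   In a 3-rainbow colouring, the rainbow tree containing three
   leaves has an edge at each of them; these edges are distinct, hence have
   distinct colours (triple_tree, rainbow_pigeonhole).  We classify the leaves
   so that no three leaves of one class fit in a rainbow tree; each class then
   has at most two leaves (card_le_fibers, fiber_le2):
   - 5 colours: the class of w is a 2-subset of the palette containing the
     colours of both edges at w; 10 classes give t <= 20 (five_colour_bound);
   - 4 colours: the class of w is (parity of c(u_0 w), c(u_1 w) >= 2), and a
     case analysis on the hubs of the tree gives t <= 8 (four_colour_bound).  A fixed 5-colouring of K_{2,20} (col5), restricted to
   K_{2,t}.  For every triple of vertices a rainbow double star (stars at u_0
   and u_1 sharing at most one leaf) is found by one computation over all
   triples of K_{2,20}, using only leaves present in every K_{2,t} with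
   9 <= t that contains the triple (all_triples_have_stars_ok); such a double
   star is a rainbow subtree (star_subtree, star_rainbow). *)

From mathcomp Require Import all_boot.
From mathcomp Require Import zify.
Set Implicit Arguments. Unset Strict Implicit. Unset Printing Implicit Defensive.

Definition i0 : 'I_2 := @Ordinal 2 0 isT.
Definition i1 : 'I_2 := @Ordinal 2 1 isT.

Notation hedge j x := [set inl j; inr x].

Lemma I2_cases (j : 'I_2) : j = i0 \/ j = i1.
Proof. by case: j => [[|[|//]]] lt_j; [left|right]; apply: val_inj. Qed.

Lemma set2_hub_leaf t j (w : 'I_t) (x y : 'I_2 + 'I_t) :
  [set x; y] = hedge j w -> (x = inl j /\ y = inr w) \/ (x = inr w /\ y = inl j).
Proof.
move=> E.
have hx : x \in hedge j w by rewrite -E set21.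
have hy : y \in hedge j w by rewrite -E set22.
have hj : inl j \in [set x; y] by rewrite E set21.
have hw : inr w \in [set x; y] by rewrite E set22.
move: hx hy hj hw; rewrite !inE.
by case/orP => /eqP ->; case/orP => /eqP ->; rewrite ?eqxx //=; auto.
Qed.

Lemma eq_hedge t j j' (x y : 'I_t) :
  (hedge j x == hedge j' y :> {set 'I_2 + 'I_t}) = (j == j') && (x == y).
Proof.
apply/idP/idP => [/eqP/set2_hub_leaf [[[->] [->]]|[]] | /andP [/eqP -> /eqP ->]] //.
by rewrite !eqxx.
Qed.

Lemma K2t_edge t (A : {set 'I_2 + 'I_t}) : edgeb (K2t t) A -> exists j w, A = hedge j w.
Proof.
case/existsP => x /existsP [y /andP [exy /eqP ->]].
case: x y exy => [j|w] [j'|w'] //= _; first by exists j, w'.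
by exists j', w; rewrite setUC.
Qed.

Lemma frel_of_sym (T : finType) (F : {set {set T}}) : symmetric (frel_of F).
Proof. by move=> x y; rewrite /frel_of setUC. Qed.

Lemma K2t_frel t (F : {set {set 'I_2 + 'I_t}}) x y :
  (forall A, A \in F -> edgeb (K2t t) A) -> frel_of F x y ->
  exists j w, (x = inl j /\ y = inr w) \/ (x = inr w /\ y = inl j).
Proof.
move=> hF hxy; have [j [w E]] := K2t_edge (hF _ hxy).
by exists j, w; apply: set2_hub_leaf.
Qed.

Lemma incident_hedge t (F : {set {set 'I_2 + 'I_t}}) (x y : 'I_t) :
  (forall A, A \in F -> edgeb (K2t t) A) -> x != y ->
  connect (frel_of F) (inr x) (inr y) -> exists j, hedge j x \in F.
Proof.
move=> hF nxy /connectP [[|z p] /= pth lst]; first by case: lst => exy; rewrite exy eqxx in nxy.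
case/andP: pth => hz _; have [j [w [[//]|[_ zj]]]] := K2t_frel hF hz.
by exists j; rewrite setUC -zj.
Qed.

Lemma uniq3 (T : eqType) (i j l : T) : uniq [:: i; j; l] -> [/\ i != j, i != l & j != l].
Proof. by rewrite /= !inE !negb_or => /andP [/andP [-> ->] /andP [-> _]]. Qed.

Lemma rainbow_pigeonhole (T : finType) k (col : {set T} -> 'I_k) F (es : seq {set T})
    (A : seq nat) :
  rainbow col F -> {subset es <= F} -> uniq es -> (forall e, e \in es -> val (col e) \in A) ->
  size es <= size A.
Proof.
move=> rb sub ues colA; rewrite -(size_map (fun e => val (col e))).
apply: uniq_leq_size => [|_ /mapP [e es_e ->]]; last exact: colA.
rewrite map_inj_in_uniq // => e e' /sub Fe /sub Fe' /val_inj; exact: rb.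
Qed.

Lemma card_le_fibers (T C : finType) (g : T -> C) (Q : pred C) m :
  (forall x, Q (g x)) -> (forall c, #|[pred x | g x == c]| <= m) -> #|T| <= #|Q| * m.
Proof.
move=> gQ fib; have -> : #|T| = \sum_(x : T) 1 by rewrite sum1_card.
rewrite (partition_big g Q) //= -sum_nat_const.
by apply: leq_sum => c _; apply: leq_trans (fib c); rewrite -sum1_card.
Qed.

Lemma fiber_le2 (T C : finType) (g : T -> C) c :
  (forall i j l, uniq [:: i; j; l] -> g i = c -> g j = c -> g l = c -> False) ->
  #|[pred x | g x == c]| <= 2.
Proof.
move=> no3; rewrite leqNgt; apply/negP; rewrite cardE.
have := enum_uniq [pred x | g x == c]; have := mem_enum [pred x | g x == c].
case: (enum _) => [|i [|j [|l s]]] // mem u _.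
have u3 : uniq [:: i; j; l] := subseq_uniq (prefix_subseq [:: i; j; l] s) u.
by apply: (no3 i j l u3); apply/eqP; rewrite -[_ == _]/(_ \in [pred x | g x == c]) -mem !inE eqxx ?orbT.
Qed.

Lemma uniq_hedges t (s : seq ('I_2 * 'I_t)) : uniq s -> uniq [seq hedge p.1 p.2 | p <- s].
Proof.
by move=> us; rewrite map_inj_uniq // => [[j x] [j' y]] /eqP /=; rewrite eq_hedge => /andP [/eqP -> /eqP ->].
Qed.

Definition is_hub t (F : {set {set 'I_2 + 'I_t}}) (w : 'I_t) : bool :=
  (hedge i0 w \in F) && (hedge i1 w \in F).

(* Without hubs, every leaf connected to a leaf adjacent to u_j is itself
   adjacent to u_j: being adjacent to u_j (or being u_j) is closed under F. *)
Lemma hubless_closure t (F : {set {set 'I_2 + 'I_t}}) j (x y : 'I_t) :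
  (forall A, A \in F -> edgeb (K2t t) A) -> (forall m, ~~ is_hub F m) ->
  hedge j x \in F -> connect (frel_of F) (inr x) (inr y) -> hedge j y \in F.
Proof.
move=> hF nohub Fx conn.
have one_side m j1 j2 : hedge j1 m \in F -> hedge j2 m \in F -> j1 = j2.
  have := nohub m; rewrite /is_hub.
  by case: (I2_cases j1) => ->; case: (I2_cases j2) => -> // nh F1 F2; rewrite F1 F2 in nh.
pose P := [pred v | (v == inl j) || ([set inl j; v] \in F)].
have clP : closed (frel_of F) P.
  apply: (intro_closed (sym_connect_sym (@frel_of_sym _ F))) => a b ab.
  rewrite !inE => /orP [/eqP aj | Fja]; first by rewrite aj /frel_of in ab; rewrite ab orbT.
  have [j' [w [[aj' bw]|[aw bj']]]] := K2t_frel hF ab; subst a b.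
    have [j'' [w' /set2_hub_leaf]] := K2t_edge (hF _ Fja).
    by case=> [] [].
  have Fj'w : hedge j' w \in F by rewrite /frel_of setUC in ab.
  by rewrite (one_side _ _ _ Fja Fj'w) eqxx.
by have := closed_connect clP conn; rewrite !inE /= Fx => <-.
Qed.

Lemma triple_tree t k (col : {set 'I_2 + 'I_t} -> 'I_k) i j l :
  rainbow3_coloring (K2t t) col -> uniq [:: i; j; l] ->
  exists F : {set {set 'I_2 + 'I_t}},
    [/\ forall A, A \in F -> edgeb (K2t t) A, rainbow col F,
        {in [:: i; j; l] &, forall x y, connect (frel_of F) (inr x) (inr y)}
      & {in [:: i; j; l], forall x, exists jx, hedge jx x \in F}].
Proof.
move=> rc u; pose s := [seq inr x | x <- [:: i; j; l]] : seq ('I_2 + 'I_t).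
have us : uniq s by rewrite map_inj_uniq // => a b [].
have [W [F [sub [_ hF _ conn _] rb]]] := rc _ (etrans (cardsE _) (card_uniqP us)).
have connF : {in [:: i; j; l] &, forall x y, connect (frel_of F) (inr x) (inr y)}.
  by move=> x y hx hy; apply: conn; apply: (subsetP sub); rewrite inE map_f.
exists F; split => // x hx; have [nij _ _] := uniq3 u.
have [y hy nxy] : exists2 y, y \in [:: i; j; l] & x != y.
  by case: (x =P i) => [->|/eqP]; [exists j | exists i]; rewrite ?inE ?eqxx ?orbT.
exact: incident_hedge hF nxy (connF _ _ hx hy).
Qed.


(* A colour different from c, used to pad a 1-element set of colours. *)
Definition another (c : 'I_5) : 'I_5 := if c == ord0 then ord_max else ord0.

Lemma another_neq c : another c != c.
Proof. by rewrite /another; case: (c =P ord0) => [->|/eqP]; rewrite // eq_sym. Qed.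

(* Five colours: for each leaf x, the colours of its two edges lie in a
   2-subset g x of the palette; three leaves sharing it would need three
   distinct colours in it.  With C(5,2) = 10 such subsets, t <= 20. *)
Lemma five_colour_bound t (col : {set 'I_2 + 'I_t} -> 'I_5) :
  rainbow3_coloring (K2t t) col -> t <= 20.
Proof.
move=> rc; pose a x := col (hedge i0 x); pose b x := col (hedge i1 x).
pose g x : {set 'I_5} := if a x == b x then [set a x; another (a x)] else [set a x; b x].
have g_col x j : col (hedge j x) \in g x.
  rewrite /g; case: (I2_cases j) => ->; rewrite -/(a x) -/(b x);
    by case: (a x =P b x) => [ab|_]; rewrite !inE ?ab eqxx ?orbT.
have g_card x : #|g x| == 2.
  by rewrite /g; case: (a x =P b x) => [_|/eqP ab]; rewrite cards2 ?ab // (eq_sym (a x)) another_neq.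
have pairs : #|(fun B : {set 'I_5} => #|B| == 2)| = 'C(#|'I_5|, 2).
  by rewrite -card_draws; apply: eq_card => B; rewrite inE.
suff fib B : #|[pred x | g x == B]| <= 2.
  by have := card_le_fibers (Q := fun B : {set 'I_5} => #|B| == 2) g_card fib; rewrite pairs !card_ord.
apply: fiber_le2 => i j l u gi gj gl.
have [F [hF rb _ inc]] := triple_tree rc u.
have [mi mj ml] : [/\ i \in [:: i; j; l], j \in [:: i; j; l] & l \in [:: i; j; l]].
  by rewrite !inE !eqxx !orbT.
have [[ji Fi] [jj Fj] [jl Fl]] := And3 (inc i mi) (inc j mj) (inc l ml).
have : 3 <= size (map val (enum B)).
  apply: (rainbow_pigeonhole (es := [seq hedge p.1 p.2 | p <- [:: (ji, i); (jj, j); (jl, l)]]) rb).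
  - by move=> e; rewrite !inE => /or3P [] /eqP ->.
  - by apply: uniq_hedges; apply: (@map_uniq _ _ snd).
  - move=> e; rewrite !inE => /or3P [] /eqP -> /=; rewrite map_f // mem_enum.
    + by rewrite -gi g_col.
    + by rewrite -gj g_col.
    + by rewrite -gl g_col.
by rewrite size_map -cardE -gi (eqP (g_card i)).
Qed.

(* Four colours: split the palette 'I_4 into two pairs in two ways, by parity
   and by halves; a parity pair and a half pair share exactly one colour. *)
Definition parity_block (p : bool) : seq nat := if p then [:: 1; 3] else [:: 0; 2].
Definition half_block (q : bool) : seq nat := if q then [:: 2; 3] else [:: 0; 1].

Lemma in_parity_block (c : 'I_4) : val c \in parity_block (odd c).
Proof. by case: c => [[|[|[|[|]]]]]. Qed.

Lemma in_half_block (c : 'I_4) : val c \in half_block (1 < c).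
Proof. by case: c => [[|[|[|[|]]]]]. Qed.

Lemma size_blocks p q : size (undup (parity_block p ++ half_block q)) = 3.
Proof. by case: p; case: q. Qed.

Section FourColours.

Variables (t : nat) (col : {set 'I_2 + 'I_t} -> 'I_4) (F : {set {set 'I_2 + 'I_t}}).
Hypothesis rb : rainbow col F.

Definition colour_class (x : 'I_t) : bool * bool :=
  (odd (col (hedge i0 x)), 1 < col (hedge i1 x)).

Lemma class_block x j p q : colour_class x = (p, q) ->
  val (col (hedge j x)) \in (if j == i0 then parity_block p else half_block q).
Proof. by case=> <- <-; case: (I2_cases j) => ->; [apply: in_parity_block | apply: in_half_block]. Qed.

Lemma class_union x j p q : colour_class x = (p, q) ->
  val (col (hedge j x)) \in undup (parity_block p ++ half_block q).
Proof. by move/(class_block j); rewrite mem_undup mem_cat; case: ifP => _ ->; rewrite ?orbT. Qed.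

(* A hub x and two further leaves y, z of the same class give four edges
   with distinct colours in a 3-element set. *)
Lemma hub_in_class p q x y z jy jz : x != y -> x != z -> y != z ->
  colour_class x = (p, q) -> colour_class y = (p, q) -> colour_class z = (p, q) ->
  is_hub F x -> hedge jy y \in F -> hedge jz z \in F -> False.
Proof.
move=> nxy nxz nyz cx cy cz /andP [F0x F1x] Fy Fz.
suff : size [:: (i0, x); (i1, x); (jy, y); (jz, z)] <= 3 by [].
rewrite -(size_blocks p q) -(size_map (fun e => hedge e.1 e.2)); apply: rainbow_pigeonhole rb _ _ _.
- by move=> e; rewrite !inE => /or4P [] /eqP ->.
- by apply: uniq_hedges; rewrite /= !inE !xpair_eqE (negbTE nxy) (negbTE nxz) (negbTE nyz) !andbF.
- by move=> e; rewrite !inE => /or4P [] /eqP ->; apply: class_union.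
Qed.

(* A hub outside three leaves incident to F gives five distinct colours. *)
Lemma hub_outside m i j l ji jj jl : uniq [:: i; j; l] -> m \notin [:: i; j; l] ->
  is_hub F m -> hedge ji i \in F -> hedge jj j \in F -> hedge jl l \in F -> False.
Proof.
case/uniq3 => nij nil njl; rewrite !inE !negb_or => /and3P [nmi nmj nml] /andP [F0m F1m] Fi Fj Fl.
suff : size [:: (i0, m); (i1, m); (ji, i); (jj, j); (jl, l)] <= 4 by [].
rewrite -[4](size_iota 0) -(size_map (fun e => hedge e.1 e.2)); apply: rainbow_pigeonhole rb _ _ _.
- by move=> e; rewrite !inE => /orP [/eqP ->|/or4P [] /eqP ->].
- apply: uniq_hedges.
  by rewrite /= !inE !xpair_eqE (negbTE nmi) (negbTE nmj) (negbTE nml) (negbTE nij) (negbTE nil) (negbTE njl) !andbF.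
- by move=> e _; rewrite mem_iota ltn_ord.
Qed.

(* Three leaves of the same class joined to the same hub u_j give three
   distinct colours in one pair. *)
Lemma same_hub_in_class p q j i l m : uniq [:: i; l; m] ->
  colour_class i = (p, q) -> colour_class l = (p, q) -> colour_class m = (p, q) ->
  hedge j i \in F -> hedge j l \in F -> hedge j m \in F -> False.
Proof.
move=> u ci cl cm Fi Fl Fm.
suff : size [:: (j, i); (j, l); (j, m)] <= size (if j == i0 then parity_block p else half_block q).
  by case: (j == i0); case: (p); case: (q).
rewrite -(size_map (fun e => hedge e.1 e.2)); apply: rainbow_pigeonhole rb _ _ _.
- by move=> e; rewrite !inE => /or3P [] /eqP ->.
- by apply: uniq_hedges; apply: (@map_uniq _ _ snd).
- by move=> e; rewrite !inE => /or3P [] /eqP ->; apply: class_block.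
Qed.

End FourColours.

(* Three leaves of one class cannot lie in a rainbow tree: either some leaf
   is a hub of the tree (inside or outside the triple), or there is no hub
   and all three hang on the same hub u_j.  With 4 classes, t <= 4 * 2. *)
Lemma four_colour_bound t (col : {set 'I_2 + 'I_t} -> 'I_4) :
  rainbow3_coloring (K2t t) col -> t <= 8.
Proof.
move=> rc; suff fib c : #|[pred x | colour_class col x == c]| <= 2.
  by have := card_le_fibers (Q := predT) (fun _ => isT) fib; rewrite card_prod !card_bool card_ord.
case: c => p q; apply: fiber_le2 => i j l u ci cj cl.
have [F [hF rb conn inc]] := triple_tree rc u.
have [nij nil njl] := uniq3 u.
have [mi mj ml] : [/\ i \in [:: i; j; l], j \in [:: i; j; l] & l \in [:: i; j; l]].
  by rewrite !inE !eqxx !orbT.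
have [[ji Fi] [jj Fj] [jl Fl]] := And3 (inc i mi) (inc j mj) (inc l ml).
case: (boolP [exists m, is_hub F m]) => [/existsP [m hub_m] | /existsPn nohub].
  case: (boolP (m \in [:: i; j; l])) => [|mT]; last exact: (hub_outside rb u mT hub_m Fi Fj Fl).
  rewrite !inE => /or3P [] /eqP mE; subst m.
  - exact: (hub_in_class rb nij nil njl ci cj cl hub_m Fj Fl).
  - by apply: (hub_in_class rb _ njl nil cj ci cl hub_m Fi Fl); rewrite eq_sym.
  - by apply: (hub_in_class rb _ _ nij cl ci cj hub_m Fi Fj); rewrite eq_sym.
have Fij := hubless_closure hF nohub Fi (conn i j mi mj).
have Fil := hubless_closure hF nohub Fi (conn i l mi ml).
exact: (same_hub_in_class rb u ci cj cl Fi Fij Fil).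
Qed.

Lemma cycle_neighbours (T : eqType) (r : rel T) (s : seq T) x :
  uniq s -> 2 < size s -> cycle r s -> x \in s ->
  exists y z, [/\ y \in s, z \in s, y != z, r x y & r z x].
Proof.
move=> us ss cs xs; case: (rot_to xs) => i s' E.
have us' : uniq (x :: s') by rewrite -E rot_uniq.
have cs' : cycle r (x :: s') by rewrite -E rot_cycle.
have ss' : 2 < size (x :: s') by rewrite -E size_rot.
have ms v : v \in x :: s' -> v \in s by rewrite -E mem_rot.
case: s' E us' cs' ss' ms => [|y [|a s3]] // E us' cs' ss' ms.
move: cs'; rewrite /cycle rcons_path => /andP [/= /andP [rxy _] rzx].
have la : last a s3 \in a :: s3 by exact: mem_last.
exists y, (last a s3); split => //.
- by apply: ms; rewrite !inE eqxx orbT.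
- by apply: ms; rewrite 2!in_cons la !orbT.
- by move: us' => /= /andP [_ /andP [ny _]]; apply: contra ny => /eqP ->.
Qed.

(* A subgraph of K_{2,t} with at most one hub has no cycle: a leaf on a cycle
   has both hubs u_0, u_1 as neighbours, so it is a hub, and the two cycle
   neighbours of u_0 would be two distinct hubs. *)
Lemma one_hub_acyclic t (F : {set {set 'I_2 + 'I_t}}) :
  (forall A, A \in F -> edgeb (K2t t) A) ->
  (forall w w', is_hub F w -> is_hub F w' -> w = w') ->
  forall s, uniq s -> 3 <= size s -> ~~ cycle (frel_of F) s.
Proof.
move=> hF one_hub s us ss; apply/negP => cs.
have nb := cycle_neighbours us ss cs.
have leaf_on_cycle w : inr w \in s -> is_hub F w /\ inl i0 \in s.
  move=> ws; have [y [z [ys zs nyz rwy rzw]]] := nb _ ws.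
  have [j1 [w1 [[//]|[[ew1] ey]]]] := K2t_frel hF rwy; subst w1 y.
  have [j2 [w2 [[ez [ew2]]|[_ //]]]] := K2t_frel hF rzw; subst w2 z.
  have F1 : hedge j1 w \in F by rewrite /frel_of setUC in rwy.
  move: ys zs F1 rzw nyz; rewrite /is_hub /frel_of.
  case: (I2_cases j1) => ->; case: (I2_cases j2) => -> ys zs F1 F2 nyz;
    by rewrite ?eqxx // in nyz; split; rewrite ?F1 ?F2.
have [w ws] : exists w, inr w \in s.
  case: s us ss cs nb leaf_on_cycle => [|[j|w] s'] // _ _ _ nb _; last by exists w; rewrite mem_head.
  have [y [_ [ys _ _ rxy _]]] := nb _ (mem_head _ _).
  have [j' [w [[_ ey]|[//]]]] := K2t_frel hF rxy.
  by exists w; rewrite -ey.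
have [_ u0s] := leaf_on_cycle w ws.
have [y [z [ys zs nyz ry rz]]] := nb _ u0s.
have [j1 [w1 [[_ ey]|[//]]]] := K2t_frel hF ry; subst y.
have [j2 [w2 [[//]|[ez _]]]] := K2t_frel hF rz; subst z.
have [[hub1 _] [hub2 _]] := (leaf_on_cycle w1 ys, leaf_on_cycle w2 zs).
by rewrite (one_hub _ _ hub1 hub2) eqxx in nyz.
Qed.

(* The 5-colouring of K_{2,20}: colours0 (resp. colours1) lists the colours
   of the edges u_0 w_x (resp. u_1 w_x); K_{2,t}, t <= 20, uses a prefix. *)
Definition colours0 : seq nat := [:: 4; 0; 3; 4; 1; 2; 3; 2; 2; 4; 1; 2; 3; 4; 1; 0; 3; 0; 0; 1].
Definition colours1 : seq nat := [:: 0; 1; 1; 3; 4; 3; 0; 4; 1; 2; 2; 0; 2; 1; 0; 2; 4; 4; 3; 3].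

Definition leaf_colour (j : 'I_2) (w : nat) : nat :=
  nth 0 (if j == i0 then colours0 else colours1) w.

Lemma leaf_colour_lt j w : leaf_colour j w < 5.
Proof.
have [/allP c0 /allP c1] : all (gtn 5) colours0 /\ all (gtn 5) colours1 by [].
rewrite /leaf_colour; case: (ltnP w 20) => [lt_w|ge_w]; last by case: ifP => _; rewrite nth_default.
by case: ifP => _; [apply: c0 | apply: c1]; apply: mem_nth.
Qed.

(* The colouring of K_{2,t}: edges u_j w_x as above, other sets arbitrary. *)
Definition col5 t (A : {set 'I_2 + 'I_t}) : 'I_5 :=
  if [pick p : 'I_2 * 'I_t | A == hedge p.1 p.2] is Some p then inord (leaf_colour p.1 p.2)
  else ord0.

Lemma col5_hedge t j (w : 'I_t) : val (col5 (hedge j w)) = leaf_colour j w.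
Proof.
rewrite /col5; case: pickP => [[j' w'] /= | /(_ (j, w))]; last by rewrite eqxx.
by rewrite eq_hedge => /andP [/eqP -> /eqP ->]; rewrite inordK ?leaf_colour_lt.
Qed.

(* A double star is given by the lists Lu, Lv of the leaves joined to u_0 and
   to u_1.  Vertices are coded by natural numbers: u_j by j, w_x by x + 2. *)
Definition star_leaves (Lu Lv : seq nat) (j : 'I_2) : seq nat := if j == i0 then Lu else Lv.

Definition star_covers (Lu Lv : seq nat) (v : nat) : bool :=
  match v with 0 => Lu != [::] | 1 => Lv != [::] | w.+2 => (w \in Lu) || (w \in Lv) end.

(* The double star is a nonempty tree (at most one common leaf, and one if
   both hubs are used) whose edges have pairwise distinct colours. *)
Definition star_ok (Lu Lv : seq nat) : bool :=
  [&& Lu ++ Lv != [::],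
      all (fun x => all (fun y => (x \in Lv) ==> (y \in Lv) ==> (x == y)) Lu) Lu,
      [|| Lu == [::], Lv == [::] | has (mem Lv) Lu] &
      uniq (map (leaf_colour i0) Lu ++ map (leaf_colour i1) Lv)].

Definition code t (v : 'I_2 + 'I_t) : nat := match v with inl j => val j | inr w => (val w).+2 end.

Lemma code_inj t : injective (@code t).
Proof.
move=> [j|w] [j'|w'] //= E.
- by congr inl; apply: val_inj.
- by have := ltn_ord j; rewrite E.
- by have := ltn_ord j'; rewrite -E.
- by congr inr; apply: val_inj; case: E.
Qed.

Lemma code_lt t (v : 'I_2 + 'I_t) : code v < t.+2.
Proof. by case: v => [j|w] /=; [apply: leq_trans (ltn_ord j) _ | rewrite !ltnS]. Qed.

Definition star_vertices t (Lu Lv : seq nat) : {set 'I_2 + 'I_t} :=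
  [set v | star_covers Lu Lv (code v)].

Definition star_edges t (Lu Lv : seq nat) : {set {set 'I_2 + 'I_t}} :=
  [set A | [exists p : 'I_2 * 'I_t, (val p.2 \in star_leaves Lu Lv p.1) && (A == hedge p.1 p.2)]].

Lemma mem_star_edges t Lu Lv j (w : 'I_t) :
  (hedge j w \in star_edges t Lu Lv) = (val w \in star_leaves Lu Lv j).
Proof.
rewrite inE; apply/existsP/idP => [[[j' w'] /andP [h]]|h]; last by exists (j, w); rewrite h eqxx.
by rewrite eq_hedge => /andP [/eqP -> /eqP ->].
Qed.

Lemma star_edgesP t Lu Lv A : A \in star_edges t Lu Lv ->
  exists j (w : 'I_t), A = hedge j w /\ val w \in star_leaves Lu Lv j.
Proof. by rewrite inE => /existsP [[j w] /andP [h /eqP ->]]; exists j, w. Qed.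

Lemma star_edges_K2t t Lu Lv A : A \in star_edges t Lu Lv -> edgeb (K2t t) A.
Proof.
case/star_edgesP => j [w [-> _]].
by apply/existsP; exists (inl j); apply/existsP; exists (inr w); rewrite eqxx.
Qed.

Lemma uniq_map_inj_in (T U : eqType) (f : T -> U) s : uniq (map f s) -> {in s &, injective f}.
Proof.
elim: s => //= a s IH /andP [fa us] x y; rewrite !inE => /orP [/eqP->|xs] /orP [/eqP->|ys] e //.
- by rewrite e map_f in fa.
- by rewrite -e map_f in fa.
- exact: IH.
Qed.

Section DoubleStar.

Variables (t : nat) (Lu Lv : seq nat).
Hypothesis leaves_lt : all (fun w => w < t) (Lu ++ Lv).
Hypothesis ok : star_ok Lu Lv.

Local Notation F := (star_edges t Lu Lv).
Local Notation W := (star_vertices t Lu Lv).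

Lemma leaf_ord n : n \in Lu ++ Lv -> exists w : 'I_t, val w = n.
Proof. by move=> n_in; exists (Ordinal (allP leaves_lt n n_in)). Qed.

Lemma leaf_edge j (w : 'I_t) : val w \in star_leaves Lu Lv j -> frel_of F (inr w) (inl j).
Proof. by rewrite /frel_of setUC mem_star_edges. Qed.

(* Both hubs in use: they are joined through a common leaf. *)
Lemma hubs_connected : Lu != [::] -> Lv != [::] -> connect (frel_of F) (inl i1) (inl i0).
Proof.
case/and4P: ok => _ _ conn _ nu nv; move: conn; rewrite (negbTE nu) (negbTE nv) /=.
case/hasP => n nu' nv'; have [w ew] : exists w : 'I_t, val w = n by apply: leaf_ord; rewrite mem_cat nu'.
apply: (@connect_trans _ _ (inr w)); apply: connect1.
  by rewrite frel_of_sym leaf_edge //= ew.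
by rewrite leaf_edge //= ew.
Qed.

(* Every vertex of the double star is connected to u_0 if Lu is nonempty,
   and to u_1 otherwise. *)
Lemma star_connected x y : x \in W -> y \in W -> connect (frel_of F) x y.
Proof.
pose root := if Lu != [::] then inl i0 else inl i1 : 'I_2 + 'I_t.
have to_root v : v \in W -> connect (frel_of F) v root.
  rewrite inE /root; case: v => [j|w] /=.
    case: (I2_cases j) => -> /= cov; first by rewrite cov.
    by case: ifP => nu; [apply: hubs_connected | apply: connect0].
  case/orP => [wu|wv].
    have -> : (Lu != [::]) = true by move: wu; case: (Lu).
    exact/connect1/leaf_edge.
  apply: (@connect_trans _ _ (inl i1)); first exact/connect1/leaf_edge.
  case: ifP => nu; last exact: connect0.
  by apply: hubs_connected => //; move: wv; case: (Lv).
move=> Wx Wy; apply: connect_trans (to_root x Wx) _.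
by rewrite (sym_connect_sym (@frel_of_sym _ F)); apply: to_root.
Qed.

Lemma star_one_hub w w' : is_hub F w -> is_hub F w' -> w = w'.
Proof.
rewrite /is_hub !mem_star_edges /= => /andP [wu wv] /andP [w'u w'v]; apply: val_inj.
case/and4P: ok => _ /allP one _ _.
by have /allP/(_ _ w'u) := one _ wu; rewrite wv w'v => /eqP.
Qed.

(* A valid double star is a subtree: it is acyclic since it has one hub. *)
Lemma star_subtree : is_subtree (K2t t) W F.
Proof.
split.
- case/and4P: ok => + _ _ _; case E: (Lu ++ Lv) => [//|n s] _.
  have [w ew] : exists w : 'I_t, val w = n by apply: leaf_ord; rewrite E mem_head.
  by apply/set0Pn; exists (inr w); rewrite inE /= -mem_cat ew E mem_head.
- exact: star_edges_K2t.
- move=> A /star_edgesP [j [w [-> wj]]]; apply/subsetP => v.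
  rewrite !inE => /orP [] /eqP -> /=; case: (I2_cases j) wj => -> /= wj.
  + by move: wj; case: (Lu).
  + by move: wj; case: (Lv).
  + by rewrite wj.
  + by rewrite wj orbT.
- exact: star_connected.
- by apply: one_hub_acyclic; [apply: star_edges_K2t | apply: star_one_hub].
Qed.

Lemma star_rainbow : rainbow (@col5 t) F.
Proof.
move=> A B /star_edgesP [j [w [-> wj]]] /star_edgesP [j' [w' [-> wj']]] /(congr1 val).
rewrite !col5_hedge; case/and4P: ok => _ _ _; rewrite cat_uniq => /and3P [u0 cross u1].
case: (I2_cases j) wj => -> wj; case: (I2_cases j') wj' => -> wj' /= e.
- by rewrite (val_inj (uniq_map_inj_in u0 wj wj' e)).
- by case/hasP: cross; exists (leaf_colour i1 w'); rewrite ?map_f // -e map_f.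
- by case/hasP: cross; exists (leaf_colour i1 w); rewrite ?map_f // e map_f.
- by rewrite (val_inj (uniq_map_inj_in u1 wj wj' e)).
Qed.

End DoubleStar.

(* Candidates are the two single stars on the leaves of the
   triple, and, for each possible common leaf m, every distribution of the
   leaves of the triple between the two hubs. *)
Fixpoint distributions (ws : seq nat) : seq (seq nat * seq nat) :=
  if ws is w :: ws' then
    [seq (w :: d.1, d.2) | d <- distributions ws'] ++ [seq (d.1, w :: d.2) | d <- distributions ws']
  else [:: ([::], [::])].

Definition star_candidates (ws : seq nat) : seq (seq nat * seq nat) :=
  (ws, [::]) :: ([::], ws) ::
  [seq (m :: filter (predC1 m) d.1, m :: filter (predC1 m) d.2) | m <- iota 0 20, d <- distributions ws].

Definition triple_leaves (s : seq nat) : seq nat := [seq v.-2 | v <- s & 1 < v].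

(* A double star for s, all of whose leaves are below 9 or at most a leaf of s,
   so that it also lives in K_{2,t} for every 9 <= t containing s. *)
Definition star_for (s Lu Lv : seq nat) : bool :=
  [&& all (star_covers Lu Lv) s,
      all (fun w => (w < 9) || has (leq w) (triple_leaves s)) (Lu ++ Lv) & star_ok Lu Lv].

Definition triple_has_star (s : seq nat) : bool :=
  has (fun d => star_for s d.1 d.2) (star_candidates (triple_leaves s)).

(* Every triple a < b < c of codes below 22, i.e. of vertices of K_{2,20},
   has a double star; checked by evaluation. *)
Definition all_triples_have_stars : bool :=
  all (fun a => all (fun b => all (fun c => triple_has_star [:: a; b; c])
                                  (iota b.+1 (21 - b)))
                    (iota a.+1 (21 - a)))
      (iota 0 22).

Lemma all_triples_have_stars_ok : all_triples_have_stars.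
Proof. by vm_compute. Qed.

Lemma triple_star t a b c : 9 <= t <= 20 -> a < b < c -> c < t.+2 ->
  exists Lu Lv, [/\ all (fun w => w < t) (Lu ++ Lv), star_ok Lu Lv
                  & all (star_covers Lu Lv) [:: a; b; c]].
Proof.
case/andP => t9 t20 /andP [ab bc] ct.
have a_in : a \in iota 0 22 by rewrite mem_iota; lia.
have b_in : b \in iota a.+1 (21 - a) by rewrite mem_iota; lia.
have c_in : c \in iota b.+1 (21 - b) by rewrite mem_iota; lia.
have := all_triples_have_stars_ok.
move=> /allP/(_ a a_in)/allP/(_ b b_in)/allP/(_ c c_in)/hasP [[Lu Lv] _ /and3P [cov small ok]].
exists Lu, Lv; split => //; apply/allP => w /(allP small) /orP [w9|/hasP [x]]; first lia.
by case/mapP => v; rewrite mem_filter !inE => /andP [v1 /or3P [] /eqP -> ->]; lia.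
Qed.

(* col5 is a 3-rainbow colouring: sort the codes of a 3-set and use the
   double star found for them. *)
Lemma five_colourable t : 9 <= t <= 20 -> rainbow3_colorable (K2t t) 5.
Proof.
move=> t_range; exists (@col5 t) => S cS.
pose cs := [seq code v | v <- enum S].
have ucs : uniq cs by rewrite map_inj_uniq ?enum_uniq //; apply: code_inj.
have [a [b [c [abc mem_abc]]]] : exists a b c, a < b < c /\ [:: a; b; c] =i cs.
  have : sorted ltn (sort leq cs).
    by rewrite ltn_sorted_uniq_leq sort_uniq ucs (sort_sorted leq_total).
  move: (mem_sort leq cs) (size_sort leq cs); rewrite size_map -cardE cS.
  by case: (sort leq cs) => [|a [|b [|c [|]]]] //= mem _ /and3P [ab bc _]; exists a, b, c; rewrite ab bc.
have c_lt : c < t.+2.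
  have : c \in cs by rewrite -mem_abc !inE eqxx !orbT.
  by case/mapP => v _ ->; apply: code_lt.
have [Lu [Lv [leaves_lt ok cov]]] := triple_star t_range abc c_lt.
exists (star_vertices t Lu Lv), (star_edges t Lu Lv); split.
- apply/subsetP => v vS; rewrite inE; apply: (allP cov).
  by rewrite mem_abc map_f // mem_enum.
- exact: star_subtree.
- exact: star_rainbow.
Qed.

Lemma widen_colorable t k m :
  k <= m -> rainbow3_colorable (K2t t) k -> rainbow3_colorable (K2t t) m.
Proof.
move=> km [col rc]; exists (fun A => widen_ord km (col A)) => S cS.
have [W [F [h1 h2 rb]]] := rc S cS; exists W, F; split => // A B hA hB eAB.
by apply: rb => //; apply: val_inj; move/(congr1 val): eAB.
Qed.

Theorem lemma5 :
  (forall t : nat, 9 <= t <= 20 -> rx3_is (K2t t) 5) /\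
  (forall t : nat, 21 <= t -> forall k, k < 6 -> ~ rainbow3_colorable (K2t t) k).
Proof.
split=> [t t_range | t t21 k lt_k].
- split=> [|k lt_k]; first exact: five_colourable.
  case/(widen_colorable (m := 4) lt_k) => col /four_colour_bound; lia.
- case/(widen_colorable (m := 5) lt_k) => col /five_colour_bound; lia.
Qed.
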